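(* For every digraph $X$, $\lambda_1(X)\le \rho(X)\le 3\lambda_1(X)$. Both inequalities are tight, i.e., each holds with equality for some digraph with at least one arc.
   Context: A digraph $X$ has a finite vertex set $V(X)$ and an arc set $E(X)$ of ordered pairs of distinct vertices; $\{x,y\}$ is a digon if both $xy$ and $yx$ are arcs. The Hermitian adjacency matrix $H(X)$ has $(u,v)$-entry $1$ if $uv$ and $vu$ are arcs, $i$ if $uv$ is an arc and $vu$ is not, $-i$ if $vu$ is an arc and $uv$ is not, and $0$ otherwise. $H(X)$ is Hermitian, so its eigenvalues are real; $\lambda_1(X)$ denotes the largest eigenvalue of $H(X)$ and $\rho(X)$ the maximum absolute value of an eigenvalue of $H(X)$. *)

From mathcomp Require Import all_boot all_order all_algebra all_field.
Set Implicit Arguments. Unset Strict Implicit. Unset Printing Implicit Defensive.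
Import Order.TTheory GRing.Theory Num.Theory.
Local Open Scope ring_scope.

(* A digraph on the vertex set 'I_n is given by an arc relation
   [arc : rel 'I_n] that is irreflexive (arcs join distinct vertices). *)

Definition hermAdj (n : nat) (arc : rel 'I_n) : 'M[algC]_n :=
  \matrix_(u, v)
    (if arc u v then (if arc v u then 1 else 'i)
     else (if arc v u then - 'i else 0)).

Definition is_lambda1 (n : nat) (H : 'M[algC]_n) (l : algC) : Prop :=
  eigenvalue H l /\ (forall a, eigenvalue H a -> a <= l).

Definition is_rho (n : nat) (H : 'M[algC]_n) (r : algC) : Prop :=
  (exists2 a, eigenvalue H a & r = `|a|) /\
  (forall a, eigenvalue H a -> `|a| <= r).

(* The Hermitian adjacency matrix H is Hermitian, so its eigenvalues are
   real and q(x) = x H x^* is at most lambda_1 |x|^2; in particular lambda_1 <= rho.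
   For a negative eigenvalue a with eigenvector v, the forms of v and of its
   conjugate add up to a form in the real matrix H + H^T, which is 2 on digons and
   0 elsewhere, hence entrywise nonnegative.  So |q(v) + q(conj v)| <= 2 q(|v|)
   <= 2 lambda_1 |v|^2, and -a |v|^2 = q(conj v) - (q(v) + q(conj v)) <= 3 lambda_1 |v|^2.
   Both bounds are attained by digraphs whose H has the form 1 - c^* c: the digon
   (|c|^2 = 2, spectrum {1, -1}) and a 4-vertex digraph (|c|^2 = 4, spectrum {1, -3}). *)

From mathcomp Require Import all_boot all_order all_algebra all_field.
From mathcomp Require Import ring.
Set Implicit Arguments. Unset Strict Implicit. Unset Printing Implicit Defensive.
Import Order.TTheory GRing.Theory Num.Theory Num.Def.
Local Open Scope ring_scope.
Local Open Scope sesquilinear_scope.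

Section HermitianForm.
Variable n : nat.
Implicit Types (M : 'M[algC]_n) (x : 'rV[algC]_n).

Definition hform M x := \sum_u \sum_w x 0 u * M u w * (x 0 w)^*.
Definition sqnorm x := \sum_u `|x 0 u| ^+ 2.

Lemma hformE M x : (x *m M *m x ^t*) 0 0 = hform M x.
Proof.
rewrite mxE /hform; under eq_bigr => w _ do rewrite !mxE big_distrl /=.
by rewrite exchange_big.
Qed.

Lemma sqnormE x : (x *m x ^t*) 0 0 = sqnorm x.
Proof. by rewrite mxE; apply: eq_bigr => u _; rewrite !mxE normCK. Qed.

Lemma sqnorm_ge0 x : 0 <= sqnorm x.
Proof. by rewrite sumr_ge0 // => u _; rewrite exprn_ge0. Qed.

Lemma sqnorm_gt0 x : x != 0 -> 0 < sqnorm x.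
Proof.
move=> x_neq0; have [u xu_neq0] : exists u, x 0 u != 0.
  apply/existsP; apply: contraNT x_neq0; rewrite negb_exists => /forallP x0.
  by apply/eqP/rowP => u; rewrite mxE; apply/eqP/negbNE.
rewrite /sqnorm (bigD1 u) //= ltr_wpDr ?sumr_ge0 // => [w _|].
  by rewrite exprn_ge0.
by rewrite exprn_gt0 ?normr_gt0.
Qed.

Lemma sqnorm_conj x : sqnorm (map_mx conjC x) = sqnorm x.
Proof. by apply: eq_bigr => u _; rewrite mxE norm_conjC. Qed.

Lemma sqnorm_norm x : sqnorm (map_mx normr x) = sqnorm x.
Proof. by apply: eq_bigr => u _; rewrite mxE normr_id. Qed.

Lemma hform_eigenvector M x a : x *m M = a *: x -> hform M x = a * sqnorm x.
Proof. by move=> xM; rewrite -hformE -sqnormE xM -scalemxAl mxE. Qed.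

Lemma hermsymmx_conjT M u w : M \is hermsymmx -> M u w = (M w u)^*.
Proof. by move=> /is_hermitianmxP /matrixP /(_ u w); rewrite scale1r !mxE. Qed.

Lemma hform_real M x : M \is hermsymmx -> hform M x \is Num.real.
Proof.
move=> M_herm; apply/CrealP; rewrite /hform rmorph_sum /= exchange_big /=.
apply: eq_bigr => w _; rewrite rmorph_sum; apply: eq_bigr => u _.
by rewrite !rmorphM /= conjCK -hermsymmx_conjT //; ring.
Qed.

Lemma hermitian_eigenvalue_real M a :
  M \is hermsymmx -> eigenvalue M a -> a \is Num.real.
Proof.
move=> M_herm /eigenvalueP [v /hform_eigenvector va v_neq0].
have /lt0r_neq0 sqv_neq0 := sqnorm_gt0 v_neq0.
have -> : a = hform M v / sqnorm v by rewrite va mulfK.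
by rewrite rpred_div ?hform_real ?ger0_real ?sqnorm_ge0.
Qed.

Lemma eigenvalue_spectral_diag M i :
  M \is normalmx -> eigenvalue M (spectral_diag M 0 i).
Proof.
move=> /orthomx_spectralP M_eq; set P := spectralmx M in M_eq.
have P_unit : P \in unitmx by apply: spectral_unit.
apply/eigenvalueP; exists (row i P).
  by rewrite -row_mul {1}M_eq !mulmxA mulmxV // mul1mx row_mul row_diag_mx
    -scalemxAl -rowE.
apply/eqP => Pi0; have : (row i P *m invmx P) 0 i = 1.
  by rewrite -row_mul mulmxV // !mxE eqxx.
by rewrite Pi0 mul0mx mxE => /eqP; rewrite eq_sym oner_eq0.
Qed.

Lemma hform_le_max_eigenvalue M l x : M \is hermsymmx ->
  (forall a, eigenvalue M a -> a <= l) -> hform M x <= l * sqnorm x.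
Proof.
move=> M_herm le_l; have M_normal := hermitian_normalmx M_herm.
have /orthomx_spectralP M_eq := M_normal.
set P := spectralmx M in M_eq; set d := spectral_diag M in M_eq.
have P_inv : invmx P = P ^t* by apply/invmx_unitary/spectral_unitarymx.
set y := x *m P ^t*; have yt : y ^t* = P *m x ^t* by rewrite trmx_mul map_mxM trmxCK.
have -> : sqnorm x = sqnorm y.
  by rewrite -!sqnormE yt /y !mulmxA -(mulmxA x) -P_inv mulVmx ?spectral_unit ?mulmx1.
have -> : hform M x = hform (diag_mx d) y.
  by rewrite -!hformE yt /y {1}M_eq P_inv !mulmxA.
rewrite /hform /sqnorm mulr_sumr; apply: ler_sum => u _.
rewrite (bigD1 u) //= big1 ?addr0 => [|w /negbTE wu]; last first.
  by rewrite !mxE eq_sym wu mulr0n mulr0 mul0r.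
rewrite !mxE eqxx mulr1n mulrAC -normCK mulrC ler_wpM2r ?exprn_ge0 //.
exact/le_l/eigenvalue_spectral_diag.
Qed.

Lemma hform_add_conj M x :
  hform M x + hform M (map_mx conjC x) =
  \sum_u \sum_w x 0 u * (M u w + M w u) * (x 0 w)^*.
Proof.
rewrite /hform [X in _ + X]exchange_big -big_split; apply: eq_bigr => u _ /=.
rewrite -big_split; apply: eq_bigr => w _ /=.
rewrite !mxE conjCK; ring.
Qed.

Lemma norm_hform_add_conj_le M x : (forall u w, 0 <= M u w + M w u) ->
  `|hform M x + hform M (map_mx conjC x)| <= hform M (map_mx normr x) *+ 2.
Proof.
move=> M_ge0; have conj_norm : map_mx conjC (map_mx normr x) = map_mx normr x.
  by apply/matrixP => i j; rewrite !mxE conj_normC.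
rewrite mulr2n -{2}conj_norm !hform_add_conj.
apply: (le_trans (ler_norm_sum _ _ _)); apply: ler_sum => u _.
apply: (le_trans (ler_norm_sum _ _ _)); apply: ler_sum => w _.
by rewrite !mxE !normrM norm_conjC conj_normC (ger0_norm (M_ge0 u w)).
Qed.

Lemma opp_eigenvalue_le M l a : M \is hermsymmx ->
  (forall u w, 0 <= M u w + M w u) ->
  (forall b, eigenvalue M b -> b <= l) -> eigenvalue M a -> - a <= 3 * l.
Proof.
move=> M_herm M_ge0 le_l /eigenvalueP [v /hform_eigenvector va v_neq0].
have sqv_gt0 := sqnorm_gt0 v_neq0.
rewrite -(ler_pM2r sqv_gt0).
set T := hform M v + hform M (map_mx conjC v).
have T_real : T \is Num.real by rewrite rpredD ?hform_real.
have le_conj : hform M (map_mx conjC v) <= l * sqnorm v.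
  by rewrite -(sqnorm_conj v) hform_le_max_eigenvalue.
have le_T : - T <= l * sqnorm v *+ 2.
  rewrite (le_trans (real_ler_norm _)) ?rpredN // normrN.
  rewrite (le_trans (norm_hform_add_conj_le v M_ge0)) // lerMn2r /=.
  by rewrite -(sqnorm_norm v) hform_le_max_eigenvalue.
have -> : - a * sqnorm v = hform M (map_mx conjC v) - T by rewrite /T va; ring.
have -> : 3 * l * sqnorm v = l * sqnorm v + l * sqnorm v *+ 2 by ring.
exact: lerD.
Qed.

Lemma hermitian_eigenvalue_norm_le M l a : M \is hermsymmx ->
  (forall u w, 0 <= M u w + M w u) ->
  (forall b, eigenvalue M b -> b <= l) -> eigenvalue M a -> `|a| <= 3 * l.
Proof.
move=> M_herm M_ge0 le_l Ma; have := le_l a Ma.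
have [a_ge0 le_al | a_lt0 _] := real_ge0P (hermitian_eigenvalue_real M_herm Ma).
  by rewrite (le_trans le_al) // ler_peMl ?ler1n // (le_trans a_ge0).
exact: (opp_eigenvalue_le M_herm M_ge0 le_l).
Qed.
End HermitianForm.

Lemma hermAdj_hermsym n (arc : rel 'I_n) : hermAdj arc \is hermsymmx.
Proof.
apply/is_hermitianmxP/matrixP => u w; rewrite scale1r !mxE.
by case: (arc u w); case: (arc w u);
  rewrite ?conjC1 ?conjC0 ?rmorphN /= ?conjCi ?opprK.
Qed.

Lemma hermAdj_addT_ge0 n (arc : rel 'I_n) u w :
  0 <= hermAdj arc u w + hermAdj arc w u.
Proof.
rewrite !mxE; case: (arc u w); case: (arc w u) => /=;
  by rewrite ?addrN ?addNr ?addr0 ?addr_ge0 ?ler01.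
Qed.

Lemma hermAdj_spectral_bounds n (arc : rel 'I_n) l r :
  is_lambda1 (hermAdj arc) l -> is_rho (hermAdj arc) r -> l <= r /\ r <= 3 * l.
Proof.
have H_herm := hermAdj_hermsym arc.
move=> [l_eig le_l] [[a a_eig ->] le_r]; split.
  exact: le_trans (real_ler_norm (hermitian_eigenvalue_real H_herm l_eig)) (le_r l l_eig).
exact: hermitian_eigenvalue_norm_le H_herm (@hermAdj_addT_ge0 _ arc) le_l a_eig.
Qed.

Section OneSubOuter.
Variables (n : nat) (c : 'rV[algC]_n).

Definition one_sub_outer : 'M[algC]_n := 1%:M - c ^t* *m c.

Lemma one_sub_outerE i j : one_sub_outer i j = (i == j)%:R - (c 0 i)^* * c 0 j.
Proof. by rewrite !mxE big_ord1 !mxE. Qed.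

Lemma mul_one_sub_outer v : v *m one_sub_outer = v - (v *m c ^t*) 0 0 *: c.
Proof. by rewrite mulmxBr mulmx1 mulmxA {1}[v *m _]mx11_scalar mul_scalar_mx. Qed.

Lemma eigenvalue_one_sub_outer a :
  eigenvalue one_sub_outer a -> a = 1 \/ a = 1 - sqnorm c.
Proof.
move=> /eigenvalueP [v va v_neq0]; set s := (v *m c ^t*) 0 0.
have [s0 | s_neq0] := eqVneq s 0.
  left; have : (a - 1) *: v = 0.
    by rewrite scalerBl scale1r -va mul_one_sub_outer -/s s0 scale0r subr0 subrr.
  by move/eqP; rewrite scaler_eq0 subr_eq0 (negbTE v_neq0) orbF => /eqP.
right; apply: (mulIf s_neq0).
have /(congr1 (fun w => w *m c ^t*)) := va.
rewrite mul_one_sub_outer mulmxBl -!scalemxAl [v *m _]mx11_scalar.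
rewrite [c *m _]mx11_scalar sqnormE -/s => /rowP /(_ 0); rewrite !mxE eqxx !mulr1n.
by move=> <-; ring.
Qed.

Lemma eigenvalue_one_sub_outer1 (v : 'rV[algC]_n) :
  v != 0 -> (v *m c ^t*) 0 0 = 0 -> eigenvalue one_sub_outer 1.
Proof.
move=> v_neq0 vc0; apply/eigenvalueP; exists v => //.
by rewrite mul_one_sub_outer vc0 scale0r subr0 scale1r.
Qed.

Lemma eigenvalue_one_sub_outer_sqnorm :
  c != 0 -> eigenvalue one_sub_outer (1 - sqnorm c).
Proof.
move=> c_neq0; apply/eigenvalueP; exists c => //.
by rewrite mul_one_sub_outer sqnormE scalerBl scale1r.
Qed.

Lemma one_sub_outer_lambda1 :
  eigenvalue one_sub_outer 1 -> is_lambda1 one_sub_outer 1.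
Proof.
split=> // a /eigenvalue_one_sub_outer [-> // | ->].
by rewrite lerBlDr lerDl sqnorm_ge0.
Qed.

Lemma one_sub_outer_rho : 2 <= sqnorm c -> is_rho one_sub_outer (sqnorm c - 1).
Proof.
move=> ge2; have c_neq0 : c != 0.
  apply: contraTneq ge2 => ->; rewrite /sqnorm big1 => [|u _]; last first.
    by rewrite mxE normr0 expr0n.
  by rewrite lt_geF ?ltr0n.
have norm_eig : `|1 - sqnorm c| = sqnorm c - 1.
  by rewrite distrC ger0_norm // subr_ge0 (le_trans _ ge2) ?ler1n.
split; first by exists (1 - sqnorm c); rewrite ?eigenvalue_one_sub_outer_sqnorm.
move=> a /eigenvalue_one_sub_outer [->|->]; rewrite ?norm_eig // normr1.
by rewrite lerBrDl (le_trans ge2) // -natrD lern.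
Qed.
End OneSubOuter.

Definition arc2 : rel 'I_2 := fun u v => u != v.
Definition c2 : 'rV[algC]_2 := \row_i (-1) ^+ i.

Lemma hermAdj_arc2 : hermAdj arc2 = one_sub_outer c2.
Proof.
apply/matrixP => -[[|[|i]] ?] -[[|[|j]] ?] //=; rewrite one_sub_outerE !mxE /=.
all: rewrite ?rmorphN /= ?conjC1; ring.
Qed.

Lemma sqnorm_c2 : sqnorm c2 = 2.
Proof. by rewrite /sqnorm !big_ord_recl big_ord0 !mxE !normrX normrN1 !expr1n addr0. Qed.

Lemma arc2_spectrum : is_lambda1 (hermAdj arc2) 1 /\ is_rho (hermAdj arc2) 1.
Proof.
have one_eig : eigenvalue (one_sub_outer c2) 1.
  apply: (@eigenvalue_one_sub_outer1 _ _ (const_mx 1)).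
    by apply/eqP => /rowP /(_ ord0); rewrite !mxE; apply/eqP/oner_neq0.
  by rewrite mxE !big_ord_recl big_ord0 !mxE /= rmorphN /= conjC1; ring.
rewrite hermAdj_arc2; split; first exact: one_sub_outer_lambda1.
have -> : (1 : algC) = sqnorm c2 - 1 by rewrite sqnorm_c2; ring.
by apply: one_sub_outer_rho; rewrite sqnorm_c2.
Qed.

Definition arc4 : rel 'I_4 := fun u v =>
  (val u, val v) \in [:: (0, 1); (1, 3); (3, 2); (2, 0); (0, 3); (3, 0); (1, 2); (2, 1)]%N.
Definition c4 : 'rV[algC]_4 := \row_i [:: 1; - 'i; 'i; -1]`_i.

Lemma hermAdj_arc4 : hermAdj arc4 = one_sub_outer c4.
Proof.
have i2 : ('i : algC) ^+ 2 = -1 by rewrite sqrCi.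
apply/matrixP => -[[|[|[|[|i]]]] ?] -[[|[|[|[|j]]]] ?] //=.
all: rewrite one_sub_outerE !mxE /= ?rmorphN /= ?conjC1 ?conjCi; ring: i2.
Qed.

Lemma sqnorm_c4 : sqnorm c4 = 4.
Proof.
by rewrite /sqnorm !big_ord_recl big_ord0 !mxE /= !normrN normr1 normCi expr1n addr0.
Qed.

Lemma arc4_spectrum : is_lambda1 (hermAdj arc4) 1 /\ is_rho (hermAdj arc4) 3.
Proof.
have one_eig : eigenvalue (one_sub_outer c4) 1.
  apply: (@eigenvalue_one_sub_outer1 _ _ (\row_i [:: 1; 0; 0; 1]`_i)).
    by apply/eqP => /rowP /(_ ord0); rewrite !mxE; apply/eqP/oner_neq0.
  by rewrite mxE !big_ord_recl big_ord0 !mxE /= rmorphN /= conjC1; ring.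
rewrite hermAdj_arc4; split; first exact: one_sub_outer_lambda1.
have -> : (3 : algC) = sqnorm c4 - 1 by rewrite sqnorm_c4; ring.
by apply: one_sub_outer_rho; rewrite sqnorm_c4 ler_nat.
Qed.

Theorem theorem5p6 :
  (forall (n : nat) (arc : rel 'I_n), irreflexive arc ->
     forall l r : algC,
       is_lambda1 (hermAdj arc) l -> is_rho (hermAdj arc) r ->
       l <= r /\ r <= 3 * l)
  /\
  (exists (n : nat) (arc : rel 'I_n),
     [/\ irreflexive arc, (exists u v, arc u v) &
       exists l r : algC,
         [/\ is_lambda1 (hermAdj arc) l, is_rho (hermAdj arc) r & l = r]])
  /\
  (exists (n : nat) (arc : rel 'I_n),
     [/\ irreflexive arc, (exists u v, arc u v) &
       exists l r : algC,
         [/\ is_lambda1 (hermAdj arc) l, is_rho (hermAdj arc) r & r = 3 * l]]).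
Proof.
split; first by move=> n arc _; apply: hermAdj_spectral_bounds.
have [lambda1_2 rho_2] := arc2_spectrum; have [lambda1_4 rho_4] := arc4_spectrum.
split.
  exists 2%N, arc2; split; first by move=> u; rewrite /arc2 eqxx.
    by exists ord0, ord_max.
  by exists 1, 1.
exists 4%N, arc4; split; first by case=> [[|[|[|[|u]]]] ?].
  by exists ord0, ord_max.
by exists 1, 3; rewrite mulr1.
Qed.
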